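(* Let $A$ be an arborescence. The poset consisting of the (arc sets of) nonempty directed paths of $A$, ordered by inclusion, has order dimension at most $3$.
   Context: An arborescence is a directed tree with a root $r$ such that every node is reachable from $r$ by a directed path. The order dimension of a poset $P$ is the least number of linear orders on its ground set whose intersection is the order of $P$. *)

From mathcomp Require Import all_boot.
Set Implicit Arguments. Unset Strict Implicit. Unset Printing Implicit Defensive.

Section Arb.
Variable T : finType.

Definition und (e : rel T) : rel T := fun u v => e u v || e v u.

(* a directed tree: an orientation of a (finite, simple) tree, i.e. no loops,
   no pair of opposite arcs, underlying undirected graph connected and acyclic *)
Definition directed_tree (e : rel T) : Prop :=
  (forall v, ~~ e v v) /\
  (forall u v, e u v -> ~~ e v u) /\
  (forall u v, connect (und e) u v) /\
  (~ exists s : seq T, [/\ 3 <= size s, uniq s & cycle (und e) s]).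

Definition arborescence (e : rel T) (r : T) : Prop :=
  directed_tree e /\ forall v, connect e r v.

Definition ne_dipath (e : rel T) (p : seq T) : bool :=
  match p with
  | [::] => false
  | x :: s => [&& 0 < size s, uniq p & path e x s]
  end.

Definition arcs (p : seq T) : {set T * T} := [set a in zip p (behead p)].

Definition path_arcsets (e : rel T) (S : {set T * T}) : Prop :=
  exists p, ne_dipath e p /\ S = arcs p.
End Arb.

Definition linear_order_on (U : Type) (X : U -> Prop) (L : U -> U -> Prop) :=
  [/\ (forall x, X x -> L x x),
      (forall x y, X x -> X y -> L x y -> L y x -> x = y),
      (forall x y z, X x -> X y -> X z -> L x y -> L y z -> L x z) &
      (forall x y, X x -> X y -> L x y \/ L y x)].

Definition order_dim_le (U : Type) (X : U -> Prop) (le : U -> U -> Prop) (k : nat) :=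
  exists L : 'I_k -> U -> U -> Prop,
    (forall i, linear_order_on X (L i)) /\
    (forall x y, X x -> X y -> (le x y <-> forall i, L i x y)).

From mathcomp Require Import all_boot all_order.
From Stdlib Require Import ClassicalEpsilon.
Set Implicit Arguments. Unset Strict Implicit. Unset Printing Implicit Defensive.
Import Order.TTheory.

(* Every vertex of an arborescence has a unique in-arc, so the arc set of a
   directed path from x to y is determined by the vertices following x on the
   root path of y.  Hence S1 is contained in S2 iff the start of S2 is an
   ancestor of the start of S1 and the end of S1 is an ancestor of the end of
   S2.  Enumerate the vertices and compare root paths lexicographically: being
   an ancestor is the intersection of this order with the one for the reversed
   enumeration, and once both starts lie on a common root path, being an
   ancestor there is just the lexicographic order.  So inclusion is the
   intersection of three total preorders (the reversed lexicographic order on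
   starts, and both lexicographic orders on ends); breaking ties by a linear
   extension of inclusion turns them into linear orders. *)

Lemma prefix_comparable (T : eqType) (s t u : seq T) :
  prefix s u -> prefix t u -> prefix s t || prefix t s.
Proof.
rewrite !prefixE => /eqP Es /eqP Et.
case: (leqP (size s) (size t)) => [le_st|/ltnW le_ts].
  by rewrite -Et take_takel // Es eqxx.
by rewrite -Es take_takel // Et eqxx orbT.
Qed.

Lemma prefix_map (T1 T2 : eqType) (f : T1 -> T2) (s t : seq T1) :
  injective f -> prefix (map f s) (map f t) = prefix s t.
Proof. by move=> f_inj; rewrite !prefixE size_map -map_take (inj_eq (inj_map f_inj)). Qed.

Section LexiPrefix.
Context {d : Order.disp_t}.
Local Open Scope order_scope.

Lemma lexi_prefix (T : preorderType d) (s t : seq T) :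
  prefix s t -> s <= t :> seqlexi T.
Proof. by move=> /prefixP[w ->]; elim: s => //= x s IHs; rewrite eqhead_lexiE. Qed.

Lemma lexi_catl (T : porderType d) (s w : seq T) :
  (s ++ w <= s :> seqlexi T) = (w == [::]).
Proof. by elim: s => [|x s IHs]; rewrite ?lexis0 // cat_cons eqhead_lexiE. Qed.

Lemma lexi_prefixesE (T : porderType d) (s t u : seq T) :
  prefix s u -> prefix t u -> (s <= t :> seqlexi T) = prefix s t.
Proof.
move=> su tu; apply/idP/idP; last exact: lexi_prefix.
case/orP: (prefix_comparable su tu) => // /prefixP[w ->].
by rewrite lexi_catl => /eqP->; rewrite cats0 prefix_refl.
Qed.

Lemma lexi_dual_prefix (T : orderType d) (s t : seq T) :
  (s <= t :> seqlexi T) && (s <= t :> seqlexi T^d) = prefix s t.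
Proof.
elim: s t => [|x s IHs] [|y t] //=; rewrite !lexi_cons.
by rewrite !leEdual -IHs; case: ltgtP.
Qed.
End LexiPrefix.

Section Rank.
Context {d : Order.disp_t} (T : finType) (D : orderType d) (f : T -> D).

Definition rank_of x := #|[set z | (f z <= f x)%O]|.

Lemma leq_rank_of x y : (rank_of x <= rank_of y) = (f x <= f y)%O.
Proof.
case: (leP (f x) (f y)) => [le_xy|lt_yx].
  by apply: subset_leq_card; apply/subsetP => z; rewrite !inE => /le_trans; apply.
apply/negbTE; rewrite -ltnNge; apply: proper_card; rewrite properE; apply/andP; split.
  by apply/subsetP => z; rewrite !inE => /le_trans; apply; apply: ltW.
by apply/subsetPn; exists x; rewrite !inE ?lexx // -ltNge.
Qed.
End Rank.

Lemma order_dim_le_keys (U : Type) (X : U -> Prop) (le : U -> U -> Prop) n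
    {d : Order.disp_t} (K : orderType d) (key : 'I_n -> U -> K) :
  (forall i x y, X x -> X y -> key i x = key i y -> x = y) ->
  (forall x y, X x -> X y -> le x y <-> forall i, (key i x <= key i y)%O) ->
  order_dim_le X le n.
Proof.
move=> key_inj leE; exists (fun i x y => (key i x <= key i y)%O); split => // i.
split=> [x _|x y Xx Xy lexy leyx|x y z _ _ _|x y _ _].
- exact: lexx.
- by apply: (key_inj i) => //; apply/le_anti; rewrite lexy.
- exact: le_trans.
- by case/orP: (le_total (key i x) (key i y)); [left|right].
Qed.

Lemma order_dim_le_lexi (U : Type) (X : U -> Prop) (le : U -> U -> Prop) n
    {d : Order.disp_t} (K : orderType d) (key : 'I_n -> U -> nat) (tie : U -> K) :
  (forall x y, X x -> X y -> tie x = tie y -> x = y) ->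
  (forall x y, X x -> X y -> le x y -> (tie x <= tie y)%O) ->
  (forall x y, X x -> X y -> le x y <-> forall i, key i x <= key i y) ->
  order_dim_le X le n.
Proof.
move=> tie_inj tie_mono leE.
apply: (@order_dim_le_keys _ _ _ _ _ (nat *l K) (fun i x => (key i x, tie x))).
  by move=> i x y Xx Xy [_ /tie_inj]; apply.
move=> x y Xx Xy; split=> [lexy i|le_lexi].
  rewrite lexi_pair leEnat ((leE x y Xx Xy).1 lexy i) /=; apply/implyP => _.
  exact: tie_mono.
by apply/leE => // i; have /andP[] := le_lexi i; rewrite leEnat.
Qed.

Section CardEnumRank.
Variable A : finType.

Definition card_enum_rank (S : {set A}) : nat *l 'I_#|{set A}| :=
  (#|S|, enum_rank S).

Lemma card_enum_rank_inj : injective card_enum_rank.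
Proof. by move=> S1 S2 [_ /enum_rank_inj]. Qed.

Lemma card_enum_rank_subset (S1 S2 : {set A}) :
  S1 \subset S2 -> (card_enum_rank S1 <= card_enum_rank S2)%O.
Proof.
move=> sub12; rewrite lexi_pair leEnat (subset_leq_card sub12) /=.
by apply/implyP => le21; have /eqP-> : S1 == S2 by rewrite eqEcard sub12.
Qed.
End CardEnumRank.

Lemma split_last_mem (T : eqType) (Q : pred T) x (s : seq T) : Q x ->
  exists s1 s2, [/\ s = s1 ++ s2, Q (last x s1) & all (predC Q) s2].
Proof.
move=> Qx; elim/last_ind: s => [|s y [s1 [s2 [-> Qc Q's2]]]].
  by exists [::], [::].
case Qy: (Q y).
  by exists (rcons (s1 ++ s2) y), [::]; rewrite cats0 last_rcons.
by exists s1, (rcons s2 y); rewrite rcons_cat all_rcons /= Qy.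
Qed.

Lemma cycle_cat_rev (T : eqType) (R : rel T) (c v : T) (p q : seq T) :
  symmetric R -> path R c (rcons p v) -> path R c (rcons q v) ->
  cycle R (c :: p ++ v :: rev q).
Proof.
move=> symR Rp Rq; rewrite /cycle -cat_rcons rcons_cat -rev_cons cat_path Rp.
rewrite last_rcons -(last_rcons c q v) -[c :: q](belast_rcons c q v) rev_path.
by rewrite (eq_path (e' := R)) // => x y; rewrite symR.
Qed.

Section Arborescence.
Variables (T : finType) (e : rel T) (r : T).
Hypothesis e_irrefl : forall v, ~~ e v v.
Hypothesis e_asym : forall u v, e u v -> ~~ e v u.
Hypothesis und_acyclic :
  ~ exists s : seq T, [/\ 3 <= size s, uniq s & cycle (und e) s].
Hypothesis root_reach : forall v, connect e r v.

Lemma dipath_und x p : path e x p -> path (und e) x p.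
Proof. by apply: sub_path => a b eab; rewrite /und eab. Qed.

Lemma uniq_dipath_open x p : uniq (x :: p) -> path e x p -> ~~ e (last x p) x.
Proof.
case: p => [|y [|z p]] /= => [_ _|_ /andP[exy _]|u_p e_p]; first exact: e_irrefl.
  exact: e_asym.
apply/negP => e_last; apply: und_acyclic; exists [:: x, y, z & p]; split=> //.
by rewrite /cycle rcons_path dipath_und //= /und e_last.
Qed.

Lemma dipath_closed x p : path e x p -> last x p = x -> p = [::].
Proof.
case/lastP: p => // p y; rewrite rcons_path last_rcons => /andP[e_p e_y] y_x; subst y.
case: (shortenP e_p) e_y => p' e_p' u_p' _ e_y.
by move: (uniq_dipath_open u_p' e_p'); rewrite e_y.
Qed.

Lemma dipath_uniq x p : path e x p -> uniq (x :: p).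
Proof.
elim/last_ind: p => // p y IHp; rewrite rcons_path => /andP[e_p e_y].
rewrite -rcons_cons rcons_uniq IHp // andbT; apply/negP => p_y.
case/splitPl: p_y e_p e_y => p1 p2 p1y; rewrite cat_path last_cat p1y.
move=> /andP[_ e_p2] e_y.
have /(dipath_closed (x := y)) : path e y (rcons p2 y) by rewrite rcons_path e_p2.
by rewrite last_rcons => /(_ erefl); case: p2 {e_p2 e_y}.
Qed.

Lemma root_path_exists v : exists p, path e r p && (last r p == v).
Proof. by case/connectP: (root_reach v) => p e_p ->; exists p; rewrite e_p eqxx. Qed.

Definition rpath v := xchoose (root_path_exists v).

Lemma rpath_path v : path e r (rpath v).
Proof. by case/andP: (xchooseP (root_path_exists v)). Qed.

Lemma rpath_last v : last r (rpath v) = v.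
Proof. by apply/eqP; case/andP: (xchooseP (root_path_exists v)). Qed.

Lemma in_arc_unique a b v : e a v -> e b v -> a = b.
Proof.
move=> e_av e_bv; apply/eqP/negPn/negP => neq_ab.
case: (root_path_exists a) => pa /andP[e_pa /eqP pa_a].
case: (root_path_exists b) => qb /andP[e_qb /eqP qb_b].
(* c is the last vertex of the root path of a lying on that of b, so
   c ~> a -> v <- b <~ c is an undirected cycle. *)
have [s1 [p [def_pa qb_c p_qb]]] :=
  split_last_mem (Q := fun w => w \in r :: qb) pa (mem_head r qb).
set c := last r s1 in qb_c; case/splitPl: qb_c p_qb e_qb qb_b => q1 q q1_c p_q.
rewrite cat_path last_cat q1_c => /andP[_ e_q] q_b.
move: e_pa pa_a; rewrite def_pa cat_path last_cat -/c => /andP[_ e_p] p_a.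
have e_pv : path e c (rcons p v) by rewrite rcons_path e_p p_a.
have e_qv : path e c (rcons q v) by rewrite rcons_path e_q q_b.
apply: und_acyclic; exists (c :: p ++ v :: rev q); split.
- rewrite /= size_cat /= size_rev addnS !ltnS lt0n addn_eq0 !size_eq0.
  by apply: contra neq_ab => /andP[/eqP p0 /eqP q0]; rewrite -p_a -q_b p0 q0.
- rewrite -cat_rcons -cat_cons cat_uniq dipath_uniq //= rev_uniq.
  have /= := dipath_uniq e_qv; rewrite mem_rcons inE negb_or rcons_uniq.
  case/and3P=> /andP[_ c'q] v'q ->.
  rewrite andbT; apply/hasPn => w; rewrite mem_rev inE mem_rcons inE => q_w.
  rewrite negb_or (memPn c'q) //= negb_or (memPn v'q) //=.
  by apply/negP => /(allP p_q); rewrite /= inE mem_cat q_w !orbT.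
- by apply: cycle_cat_rev (dipath_und e_pv) (dipath_und e_qv) => x y; apply: orbC.
Qed.

Lemma dipath_unique x p q :
  path e x p -> path e x q -> last x p = last x q -> p = q.
Proof.
elim/last_ind: p q => [|p a IHp] q.
  by case/lastP: q => // q b _ e_q /esym/(dipath_closed e_q).
case/lastP: q => [e_p _ /(dipath_closed e_p)//|q b].
rewrite !rcons_path !last_rcons => /andP[e_p e_a] /andP[e_q e_b] ab; subst b.
by rewrite (IHp q e_p e_q (in_arc_unique e_a e_b)).
Qed.

Lemma rpath_cat x s : path e x s -> rpath (last x s) = rpath x ++ s.
Proof.
move=> e_s; apply: (@dipath_unique r); rewrite ?rpath_path ?rpath_last //.
  by rewrite cat_path rpath_path rpath_last.
by rewrite last_cat rpath_last.
Qed.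

Lemma mem_arcs x s a b :
  path e x s -> ((a, b) \in arcs (x :: s)) = (b \in s) && e a b.
Proof.
rewrite /arcs inE /=; elim: s x => [|y s IHs] x //= /andP[e_xy e_s].
rewrite in_cons IHs // inE; apply/idP/idP => [/orP[/eqP[-> ->]|/andP[-> ->]]|].
- by rewrite eqxx.
- by rewrite orbT.
case/andP=> /orP[/eqP->|s_b] e_ab; last by rewrite s_b e_ab orbT.
by rewrite (in_arc_unique e_ab e_xy) eqxx.
Qed.

Lemma dipath_in_arc x s b : path e x s -> b \in s -> exists a, e a b.
Proof.
elim: s x => // y s IHs x /= /andP[e_xy e_s]; rewrite inE => /orP[/eqP->|].
  by exists x.
exact: IHs e_s.
Qed.

Lemma arcs_subset x1 s1 x2 s2 : path e x1 s1 -> path e x2 s2 ->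
  arcs (x1 :: s1) \subset arcs (x2 :: s2) <-> {subset s1 <= s2}.
Proof.
move=> e_s1 e_s2; split => [/subsetP sub12 b s1_b|sub12].
  have [a e_ab] := dipath_in_arc e_s1 s1_b.
  have /sub12 : (a, b) \in arcs (x1 :: s1) by rewrite mem_arcs // s1_b e_ab.
  by rewrite mem_arcs // => /andP[].
by apply/subsetP => -[a b]; rewrite !mem_arcs // => /andP[/sub12 -> ->].
Qed.

Lemma rpath_mem x s w : path e x s -> w \in s ->
  exists t1 t2, [/\ t1 != [::], s = t1 ++ t2 & rpath w = rpath x ++ t1].
Proof.
move=> e_s s_w; have /andP[x's _] := dipath_uniq e_s.
have xs_w : w \in x :: s by rewrite inE s_w orbT.
case/splitPl: xs_w e_s s_w x's => t1 t2 t1_w e_s s_w x's; exists t1, t2; split=> //.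
  by apply: contraNneq x's => t1_0; move: t1_w s_w; rewrite t1_0 => /= ->.
by rewrite -t1_w rpath_cat //; move: e_s; rewrite cat_path => /andP[].
Qed.

Lemma arcs_subset_prefix x1 s1 x2 s2 :
  s1 != [::] -> path e x1 s1 -> path e x2 s2 ->
  arcs (x1 :: s1) \subset arcs (x2 :: s2) <->
  prefix (rpath x2) (rpath x1) /\
  prefix (rpath (last x1 s1)) (rpath (last x2 s2)).
Proof.
move=> s1_ne e_s1 e_s2; apply: iff_trans (arcs_subset e_s1 e_s2) _.
split=> [sub12|[]].
  case: s1 s1_ne e_s1 sub12 => // f s1 _ e_s1 sub12; split.
    have [t [_ [t_ne _ rpath_f]]] := rpath_mem e_s2 (sub12 f (mem_head f s1)).
    have /andP[e_x1f _] := e_s1.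
    move: rpath_f; rewrite (rpath_cat (x := x1) (s := [:: f])) /= ?e_x1f // cats1.
    case/lastP: t t_ne => // t f' _; rewrite -rcons_cat.
    by case/rcons_inj => -> _; apply: prefix_prefix.
  have [t1 [t2 [_ def_s2 rpath_y1]]] := rpath_mem e_s2 (sub12 _ (mem_last f s1)).
  by rewrite [X in prefix _ X]rpath_cat // def_s2 catA -rpath_y1 prefix_prefix.
move=> /prefixP[m rpath_x1] /prefixP[n].
rewrite !rpath_cat // rpath_x1 -!catA => /(congr1 (drop (size (rpath x2)))).
by rewrite !drop_size_cat // => -> w s1_w; rewrite mem_cat mem_cat s1_w orbT.
Qed.

Definition rcode v : seq nat := map (fun w => val (enum_rank w)) (rpath v).

Lemma prefix_rcode u v : prefix (rcode u) (rcode v) = prefix (rpath u) (rpath v).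
Proof. by apply: prefix_map => x y /val_inj/enum_rank_inj. Qed.

Lemma arcs_subset_lexi x1 s1 x2 s2 :
  s1 != [::] -> path e x1 s1 -> path e x2 s2 ->
  arcs (x1 :: s1) \subset arcs (x2 :: s2) <->
  [/\ (rcode x2 <= rcode x1 :> seqlexi nat)%O,
      (rcode (last x1 s1) <= rcode (last x2 s2) :> seqlexi nat)%O &
      (rcode (last x1 s1) <= rcode (last x2 s2) :> seqlexi nat^d)%O].
Proof.
move=> s1_ne e_s1 e_s2; apply: iff_trans (arcs_subset_prefix s1_ne e_s1 e_s2) _.
split=> [[px py]|[lx ly ld]].
  have /andP[-> ->] : (rcode (last x1 s1) <= rcode (last x2 s2) :> seqlexi nat)%O &&
                      (rcode (last x1 s1) <= rcode (last x2 s2) :> seqlexi nat^d)%O.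
    by rewrite lexi_dual_prefix prefix_rcode.
  by split=> //; apply: lexi_prefix; rewrite prefix_rcode.
have py : prefix (rpath (last x1 s1)) (rpath (last x2 s2)).
  by rewrite -prefix_rcode -lexi_dual_prefix ly ld.
split=> //; rewrite -prefix_rcode -(lexi_prefixesE (u := rcode (last x2 s2))) //.
  by rewrite prefix_rcode rpath_cat // prefix_prefix.
by rewrite prefix_rcode; apply: prefix_trans py; rewrite rpath_cat // prefix_prefix.
Qed.

Definition pick_path (S : {set T * T}) : seq T :=
  epsilon (inhabits [::]) (fun p => ne_dipath e p /\ S = arcs p).

Lemma pick_pathP S : path_arcsets e S ->
  exists x s, [/\ pick_path S = x :: s, s != [::], path e x s & S = arcs (x :: s)].
Proof.
move=> /(epsilon_spec (inhabits [::])); rewrite -/(pick_path S).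
case: (pick_path S) => [[]|x s [/and3P[s_ne _ e_s] def_S]] //.
by exists x, s; rewrite -size_eq0 -lt0n.
Qed.

Definition path_key (i : 'I_3) (S : {set T * T}) : nat :=
  let p := pick_path S in
  match val i with
  | 0 => rank_of (fun v => rcode v : (seqlexi nat)^d) (head r p)
  | 1 => rank_of (fun v => rcode v : seqlexi nat) (last r p)
  | _ => rank_of (fun v => rcode v : seqlexi nat^d) (last r p)
  end.

Lemma path_arcsets_dim3 :
  order_dim_le (path_arcsets e) (fun S1 S2 : {set T * T} => S1 \subset S2) 3.
Proof.
apply: (order_dim_le_lexi (key := path_key) (tie := @card_enum_rank _)).
- by move=> S1 S2 _ _ /card_enum_rank_inj.
- by move=> S1 S2 _ _; apply: card_enum_rank_subset.
move=> S1 S2 /pick_pathP[x1 [s1 [p1 s1_ne e_s1 E1]]].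
move=> /pick_pathP[x2 [s2 [p2 _ e_s2 E2]]].
rewrite /path_key p1 p2 E1 E2 /=.
apply: iff_trans (arcs_subset_lexi s1_ne e_s1 e_s2) _.
split=> [[lx ly ld] [[|[|[|//]]] ?]|le_keys]; rewrite /= ?leq_rank_of ?leEdual //.
have := le_keys ord0; have := le_keys (@Ordinal 3 1 isT); have := le_keys ord_max.
by rewrite /= !leq_rank_of leEdual.
Qed.
End Arborescence.

Theorem proposition1 (T : finType) (e : rel T) (r : T) :
  arborescence e r ->
  order_dim_le (path_arcsets e)
    (fun S1 S2 : {set T * T} => S1 \subset S2) 3.
Proof.
case=> [[e_irrefl [e_asym [_ und_acyclic]]] root_reach].
exact: path_arcsets_dim3.
Qed.
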